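(* Fix an integer $n\ge 1$. For $m>n$ let \[ \begin{split}\delta_{m,n}(p) &= 9 + n (m^2 (2 + n)^2 + 3 (4 + n) - 2 m (5 + 2n)) - 24 p - n (12 + m^2 (2 + n) + 2 m n (3 + n)) p \\ &\qquad{}+(22 + n (8 + 2 m (1 + n) + n (3 + n))) p^2 - (8 + n (2 + n)) p^3 + p^4 ,\end{split} \] and let $p^*(m,n)$ be the real root of $\delta_{m,n}(p)=0$ that grows with $m$ (of order $m^{2/3}$). Then as $m\to\infty$, \[ p^*(m,n) = m^{2/3} (n (2 + n))^{1/3} - m^{1/3}\cdot\frac{2 n (1 + n)}{3 (n (2 + n))^{1/3}} + \frac{1}{3}(6 + n + n^2) - m^{-1/3}\cdot\frac{2 n^2 (216 + 230 n + 87 n^2 + 24 n^3 + 5 n^4)}{81 (n (2 + n))^{5/3}} + o(m^{-1/3}). \]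
   Context: $\delta_{m,n}(p)$ is a quartic polynomial in $p$ whose appropriate root (rounded) gives the optimal training-set size for a linear regression with $m$ Gaussian data points of dimension $n$. *)

From Stdlib Require Import Reals.
Open Scope R_scope.

Definition delta (m n : nat) (p : R) : R :=
  let M := INR m in let N := INR n in
  9 + N * (M^2 * (2 + N)^2 + 3 * (4 + N) - 2 * M * (5 + 2 * N))
  - 24 * p - N * (12 + M^2 * (2 + N) + 2 * M * N * (3 + N)) * p
  + (22 + N * (8 + 2 * M * (1 + N) + N * (3 + N))) * p^2
  - (8 + N * (2 + N)) * p^3 + p^4.

Definition pstar_approx (m n : nat) : R :=
  let M := INR m in let N := INR n in
  let c := Rpower (N * (2 + N)) (1/3) in
  Rpower M (2/3) * c
  - Rpower M (1/3) * (2 * N * (1 + N) / (3 * c))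
  + (1/3) * (6 + N + N^2)
  - Rpower M (-(1/3)) *
      (2 * N^2 * (216 + 230 * N + 87 * N^2 + 24 * N^3 + 5 * N^4)
       / (81 * Rpower (N * (2 + N)) (5/3))).

(* Write m = u^-3 and p = q u^-2.  Then u^8 delta_{m,n}(p) is a polynomial F(q, u) with
   F(q, 0) = q^4 - n(n+2) q, which vanishes at q = c = (n(n+2))^(1/3) with slope 3 n(n+2).
   The coefficients of the expansion are exactly those making F(q(u), u) = O(u^3) along
   q(u) = c + a1 u + a2 u^2 + a3 u^3, and shifting a3 by e turns the u^3 coefficient into
   3 n(n+2) e.  Hence delta(p* + e m^(-1/3)) has the sign of e for large m, and the
   intermediate value theorem gives a root in every window p* +- eps m^(-1/3).  For large m,
   delta is convex (its p^2 coefficient grows like m) and negative at n+3, so it has only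
   one root above n+3; a root tending to infinity must be that one. *)

From Stdlib Require Import Reals Lra Lia List Compare_dec.
From Coquelicot Require Import Coquelicot.
Import ListNotations.
Open Scope R_scope.

Fixpoint peval (l : list R) (x : R) : R :=
  match l with [] => 0 | a :: l' => a + x * peval l' x end.

Fixpoint padd (l1 l2 : list R) : list R :=
  match l1, l2 with
  | [], _ => l2
  | _, [] => l1
  | a :: l1', b :: l2' => (a + b) :: padd l1' l2'
  end.

Fixpoint pmul (l1 l2 : list R) : list R :=
  match l1 with
  | [] => []
  | a :: l1' => padd (map (Rmult a) l2) (0 :: pmul l1' l2)
  end.

Definition pcomp (ls : list (list R)) (q : list R) : list R :=
  fold_right (fun a acc => padd a (pmul q acc)) [] ls.

Lemma peval_padd l1 l2 x : peval (padd l1 l2) x = peval l1 x + peval l2 x.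
Proof.
  revert l2; induction l1 as [|a l1 IH]; intros [|b l2]; simpl; try rewrite IH; ring.
Qed.

Lemma peval_map_Rmult a l x : peval (map (Rmult a) l) x = a * peval l x.
Proof. induction l as [|b l IH]; simpl; try rewrite IH; ring. Qed.

Lemma peval_pmul l1 l2 x : peval (pmul l1 l2) x = peval l1 x * peval l2 x.
Proof.
  induction l1 as [|a l1 IH]; simpl; [ring|].
  rewrite peval_padd, peval_map_Rmult; simpl; rewrite IH; ring.
Qed.

Lemma peval_pcomp ls q x :
  peval (pcomp ls q) x = peval (map (fun a => peval a x) ls) (peval q x).
Proof.
  induction ls as [|a ls IH]; simpl; [reflexivity|].
  rewrite peval_padd, peval_pmul, IH; reflexivity.
Qed.

Lemma peval_low_order k a l x :
  firstn (S k) l = repeat 0 k ++ [a] ->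
  peval l x = x ^ k * peval (a :: skipn (S k) l) x.
Proof.
  revert l; induction k as [|k IH]; intros [|b l] H; try discriminate H.
  - injection H as Ha; rewrite Ha; simpl; ring.
  - injection H; intros Hl ->.
    change (0 + x * peval l x = x * x ^ k * peval (a :: skipn (S k) l) x).
    rewrite (IH l Hl); ring.
Qed.

Lemma is_lim_seq_peval l v (x : R) :
  is_lim_seq v x -> is_lim_seq (fun m => peval l (v m)) (peval l x).
Proof.
  intro Hv; induction l as [|a l IH]; simpl.
  - apply is_lim_seq_const.
  - apply is_lim_seq_plus'; [apply is_lim_seq_const|].
    apply is_lim_seq_mult'; assumption.
Qed.

Lemma is_lim_seq_eventually_pos v (l : R) :
  is_lim_seq v l -> 0 < l -> eventually (fun m => 0 < v m).
Proof.
  intros Hv Hl; apply is_lim_seq_spec in Hv.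
  apply (filter_imp (fun m => Rabs (v m - l) < l)); [|exact (Hv (mkposreal l Hl))].
  intros m Hm; apply Rabs_def2 in Hm; lra.
Qed.

Lemma eventually_INR_gt A : eventually (fun m => A < INR m).
Proof.
  destruct (INR_unbounded A) as [N0 HN0]; exists N0; intros m Hm.
  apply le_INR in Hm; lra.
Qed.

Lemma eventually_ge k : eventually (fun m => (k <= m)%nat).
Proof. exists k; easy. Qed.

Section SupportingLines.

Variables f f' : R -> R.
Hypothesis supporting_line : forall x y, f y + f' y * (x - y) <= f x.

Lemma chord_above x y z : x < y < z -> (z - x) * f y <= (z - y) * f x + (y - x) * f z.
Proof.
  intros Hxyz.
  pose proof (supporting_line x y) as Hx; pose proof (supporting_line z y) as Hz.
  assert (Hx' : (z - y) * (f y + f' y * (x - y)) <= (z - y) * f x)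
    by (apply Rmult_le_compat_l; lra).
  assert (Hz' : (y - x) * (f y + f' y * (z - y)) <= (y - x) * f z)
    by (apply Rmult_le_compat_l; lra).
  nra.
Qed.

Lemma root_between K b b' r :
  K < b < b' -> f K < 0 -> f b < 0 -> 0 < f b' -> K < r -> f r = 0 -> b < r < b'.
Proof.
  intros Hb HK Hfb Hfb' HKr Hr; split.
  - destruct (Rtotal_order r b) as [Hrb | [-> | Hrb]]; [| lra | lra].
    pose proof (chord_above K r b) as Hc; rewrite Hr in Hc; nra.
  - destruct (Rtotal_order r b') as [Hrb | [-> | Hrb]]; [lra | lra |].
    pose proof (chord_above b b' r) as Hc; rewrite Hr in Hc; nra.
Qed.

End SupportingLines.

Definition quartic (A B C D p : R) : R := p ^ 4 - A * p ^ 3 + B * p ^ 2 - C * p + D.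

Definition quartic_deriv (A B C p : R) : R := 4 * p ^ 3 - 3 * A * p ^ 2 + 2 * B * p - C.

Lemma quartic_supporting_line A B C D x y :
  3 * A ^ 2 < 8 * B ->
  quartic A B C D y + quartic_deriv A B C y * (x - y) <= quartic A B C D x.
Proof.
  intros HAB.
  assert (E : quartic A B C D x - quartic A B C D y - quartic_deriv A B C y * (x - y)
              = (x - y) ^ 2 * ((x + y - A / 2) ^ 2 + 2 * (y - A / 4) ^ 2 + (B - 3 * A ^ 2 / 8)))
    by (unfold quartic, quartic_deriv; field).
  assert (0 <= (x - y) ^ 2 * ((x + y - A / 2) ^ 2 + 2 * (y - A / 4) ^ 2 + (B - 3 * A ^ 2 / 8))).
  { apply Rmult_le_pos; [apply pow2_ge_0|].
    pose proof (pow2_ge_0 (x + y - A / 2)); pose proof (pow2_ge_0 (y - A / 4)); lra. }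
  lra.
Qed.

Lemma Rpower_mult_INR x y k : Rpower x (y * INR k) = Rpower x y ^ k.
Proof. rewrite <- Rpower_mult, Rpower_pow; [reflexivity | apply exp_pos]. Qed.

Lemma Rpower_third_cube x : 0 < x -> Rpower x (1 / 3) ^ 3 = x.
Proof.
  intro Hx; rewrite <- Rpower_mult_INR.
  replace (1 / 3 * INR 3) with 1 by (simpl; field); apply Rpower_1, Hx.
Qed.

Lemma Rpower_cube_third x : 0 < x -> Rpower (x ^ 3) (1 / 3) = x.
Proof.
  intro Hx; rewrite <- Rpower_pow, Rpower_mult by exact Hx.
  replace (INR 3 * (1 / 3)) with 1 by (simpl; field); apply Rpower_1, Hx.
Qed.

Definition scale (m : nat) : R := / Rpower (INR m) (1 / 3).

Lemma scale_pos m : 0 < scale m.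
Proof. apply Rinv_0_lt_compat, exp_pos. Qed.

Lemma cv_infty_cube_root : cv_infty (fun m => Rpower (INR m) (1 / 3)).
Proof.
  intros Y; set (X := Rmax 1 Y).
  assert (HX : 0 < X) by (unfold X; pose proof (Rmax_l 1 Y); lra).
  destruct (eventually_INR_gt (X ^ 3)) as [N0 HN0]; exists N0; intros m Hm.
  apply (Rle_lt_trans _ X); [apply Rmax_r|].
  rewrite <- (Rpower_cube_third X HX) at 1.
  apply Rlt_Rpower_l; [lra|].
  split; [apply pow_lt, HX | apply HN0, Hm].
Qed.

Lemma is_lim_seq_scale : is_lim_seq scale 0.
Proof. apply is_lim_seq_Reals, cv_infty_cv_0, cv_infty_cube_root. Qed.

Lemma INR_scale m : (1 <= m)%nat -> INR m = (/ scale m) ^ 3.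
Proof.
  intro Hm; unfold scale; rewrite Rinv_inv, Rpower_third_cube; [reflexivity|].
  apply lt_0_INR; lia.
Qed.

(* Row [k] lists, by powers of [u], the coefficient of [q ^ k] in [u ^ 8 * delta m n (q / u ^ 2)]
   when [m = u ^ -3]. *)
Definition delta_coefs (N : R) : list (list R) :=
  [[0; 0; N * (2 + N) ^ 2; 0; 0; -2 * N * (5 + 2 * N); 0; 0; 9 + 3 * N * (4 + N)];
   [-(N * (2 + N)); 0; 0; -2 * N ^ 2 * (3 + N); 0; 0; -(24 + 12 * N)];
   [0; 2 * N * (1 + N); 0; 0; 22 + N * (8 + N * (3 + N))];
   [0; 0; -(8 + N * (2 + N))];
   [1]].

Lemma delta_rescale m n q u :
  u <> 0 -> INR m = (/ u) ^ 3 ->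
  delta m n (peval q u / u ^ 2) = peval (pcomp (delta_coefs (INR n)) q) u / u ^ 8.
Proof.
  intros Hu Hm; rewrite peval_pcomp; unfold delta; rewrite Hm; simpl; field; exact Hu.
Qed.

Lemma delta_quartic m n p :
  let M := INR m in let N := INR n in
  delta m n p =
  quartic (8 + N * (2 + N)) (22 + N * (8 + 2 * M * (1 + N) + N * (3 + N)))
    (24 + N * (12 + M ^ 2 * (2 + N) + 2 * M * N * (3 + N)))
    (9 + N * (M ^ 2 * (2 + N) ^ 2 + 3 * (4 + N) - 2 * M * (5 + 2 * N))) p.
Proof. unfold delta, quartic; simpl; ring. Qed.

Section Expansion.

Variable n : nat.
Hypothesis n_pos : (1 <= n)%nat.

Let N := INR n.
Let s := N * (2 + N).
Let c := Rpower s (1 / 3).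

Lemma N_pos : 0 < N.
Proof. apply lt_0_INR; lia. Qed.

Lemma s_pos : 0 < s.
Proof. pose proof N_pos; unfold s; nra. Qed.

Lemma c_pos : 0 < c.
Proof. apply exp_pos. Qed.

Lemma c_cube : c ^ 3 = N * (2 + N).
Proof. apply Rpower_third_cube, s_pos. Qed.

Definition pstar_coefs (e : R) : list R :=
  [c; -(2 * N * (1 + N) / (3 * c)); (6 + N + N ^ 2) / 3;
   e - 2 * N ^ 2 * (216 + 230 * N + 87 * N ^ 2 + 24 * N ^ 3 + 5 * N ^ 4) / (81 * c ^ 5)].

Lemma pstar_shift m e : (1 <= m)%nat ->
  pstar_approx m n + e * scale m = peval (pstar_coefs e) (scale m) / scale m ^ 2.
Proof.
  intro Hm; pose proof (scale_pos m); pose proof c_pos.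
  assert (Ht : Rpower (INR m) (1 / 3) = / scale m) by (unfold scale; rewrite Rinv_inv; reflexivity).
  assert (Hc5 : Rpower s (5 / 3) = c ^ 5)
    by (unfold c; rewrite <- Rpower_mult_INR; f_equal; simpl; field).
  unfold pstar_approx, pstar_coefs; fold N s c; rewrite Hc5, Rpower_Ropp, Ht.
  replace (2 / 3) with (1 / 3 * INR 2) by (simpl; field).
  rewrite Rpower_mult_INR, Ht; simpl; field; lra.
Qed.

Lemma pstar_coefs_low_order e :
  firstn 4 (pcomp (delta_coefs N) (pstar_coefs e)) = [0; 0; 0; 3 * s * e].
Proof.
  pose proof N_pos; pose proof c_pos.
  unfold pstar_coefs, s; cbn.
  repeat (apply f_equal2; [field [c_cube]; lra |]); reflexivity.
Qed.

Lemma eventually_delta_sign e :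
  e <> 0 -> eventually (fun m => 0 < e * delta m n (pstar_approx m n + e * scale m)).
Proof.
  intro He; pose proof s_pos.
  set (P := 3 * s * e :: skipn 4 (pcomp (delta_coefs N) (pstar_coefs e))).
  assert (Hlim : is_lim_seq (fun m => e * peval P (scale m)) (e * peval P 0)).
  { apply is_lim_seq_mult'; [apply is_lim_seq_const | apply is_lim_seq_peval, is_lim_seq_scale]. }
  assert (He2 : 0 < e * e) by exact (Rsqr_pos_lt e He).
  apply is_lim_seq_eventually_pos in Hlim; [| simpl; nra].
  generalize (filter_and _ _ Hlim (eventually_ge 1)); apply filter_imp; intros m [Hpos Hm].
  pose proof (scale_pos m) as Hu.
  rewrite (pstar_shift m e Hm), delta_rescale; [| lra | exact (INR_scale m Hm)].
  rewrite (peval_low_order 3 (3 * s * e)) by exact (pstar_coefs_low_order e); fold N P.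
  replace (e * (scale m ^ 3 * peval P (scale m) / scale m ^ 8))
    with (e * peval P (scale m) / scale m ^ 5) by (field; lra).
  apply Rdiv_lt_0_compat; [exact Hpos | apply pow_lt, Hu].
Qed.

(* The m^2 coefficient of delta_{m,n}(p) is n(n+2)(n+2-p). *)
Lemma eventually_delta_3_plus_N_neg : eventually (fun m => delta m n (3 + N) < 0).
Proof.
  pose proof s_pos.
  set (q := [0; 0; 3 + N]).
  set (P := - s :: skipn 3 (pcomp (delta_coefs N) q)).
  assert (Hlow : firstn 3 (pcomp (delta_coefs N) q) = [0; 0; - s]).
  { unfold q, s; cbn; repeat (apply f_equal2; [ring |]); reflexivity. }
  assert (Hlim : is_lim_seq (fun m => - peval P (scale m)) (- peval P 0)).
  { apply (is_lim_seq_opp _ (peval P 0)), is_lim_seq_peval, is_lim_seq_scale. }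
  apply is_lim_seq_eventually_pos in Hlim; [| simpl; lra].
  generalize (filter_and _ _ Hlim (eventually_ge 1)); apply filter_imp; intros m [Hneg Hm].
  pose proof (scale_pos m) as Hu.
  replace (3 + N) with (peval q (scale m) / scale m ^ 2) by (unfold q; simpl; field; lra).
  rewrite delta_rescale; [| lra | exact (INR_scale m Hm)].
  rewrite (peval_low_order 2 (- s)) by exact Hlow; fold N P.
  replace (scale m ^ 2 * peval P (scale m) / scale m ^ 8)
    with (- (- peval P (scale m) / scale m ^ 6)) by (field; lra).
  apply Ropp_lt_gt_0_contravar, Rdiv_lt_0_compat; [exact Hneg | apply pow_lt, Hu].
Qed.

Lemma eventually_delta_convex :
  eventually (fun m => exists f' : R -> R, forall x y, delta m n y + f' y * (x - y) <= delta m n x).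
Proof.
  assert (HN : 1 <= N) by exact (le_INR 1 n n_pos).
  set (A := 8 + N * (2 + N)).
  apply (filter_imp (fun m => 3 * A ^ 2 < INR m)); [| apply eventually_INR_gt].
  intros m Hm.
  assert (HAB : 3 * A ^ 2 < 8 * (22 + N * (8 + 2 * INR m * (1 + N) + N * (3 + N)))).
  { assert (0 <= 3 * A ^ 2) by (pose proof (pow2_ge_0 A); lra).
    assert (0 <= (N * (1 + N) - 2) * INR m) by (apply Rmult_le_pos; nra).
    nra. }
  eexists; intros x y; rewrite (delta_quartic m n x), (delta_quartic m n y).
  apply quartic_supporting_line, HAB.
Qed.

Lemma eventually_pstar_gt Y e : eventually (fun m => Y < pstar_approx m n + e * scale m).
Proof.
  pose proof c_pos.
  set (L := padd (pstar_coefs e) [0; 0; - Y]).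
  assert (Hlim : is_lim_seq (fun m => peval L (scale m)) (peval L 0))
    by apply is_lim_seq_peval, is_lim_seq_scale.
  apply is_lim_seq_eventually_pos in Hlim; [| unfold L; rewrite peval_padd; simpl; lra].
  generalize (filter_and _ _ Hlim (eventually_ge 1)); apply filter_imp; intros m [Hpos Hm].
  pose proof (scale_pos m) as Hu.
  assert (E : peval (pstar_coefs e) (scale m) / scale m ^ 2 - Y = peval L (scale m) / scale m ^ 2)
    by (unfold L; rewrite peval_padd; simpl; field; lra).
  pose proof (Rdiv_lt_0_compat _ _ Hpos (pow_lt _ 2 Hu)).
  rewrite (pstar_shift m e Hm); lra.
Qed.

Lemma eventually_root_near_pstar r eps :
  0 < eps -> eventually (fun m => delta m n (r m) = 0) -> cv_infty r ->
  eventually (fun m => pstar_approx m n - eps * scale m < r m < pstar_approx m n + eps * scale m).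
Proof.
  intros Heps Hroot Hinf.
  set (K := 3 + N).
  assert (Hlo := eventually_delta_sign (- eps) ltac:(lra)).
  assert (Hhi := eventually_delta_sign eps ltac:(lra)).
  assert (Hb := eventually_pstar_gt K (- eps)).
  assert (HK : eventually (fun m => K < r m)) by exact (Hinf K).
  generalize (filter_and _ _ (filter_and _ _ eventually_delta_convex eventually_delta_3_plus_N_neg)
                (filter_and _ _ (filter_and _ _ Hlo Hhi) (filter_and _ _ (filter_and _ _ Hb Hroot) HK))).
  apply filter_imp; intros m [[[f' Hf'] HdK] [[Hdlo Hdhi] [[HKb Hr] HKr]]].
  pose proof (scale_pos m) as Hu.
  replace (pstar_approx m n - eps * scale m) with (pstar_approx m n + - eps * scale m) by ring.
  apply (root_between (delta m n) f' Hf' K); try assumption; nra.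
Qed.

Lemma eventually_root_exists :
  exists r : nat -> R,
    eventually (fun m => delta m n (r m) = 0 /\ pstar_approx m n - scale m <= r m).
Proof.
  assert (Hlo := eventually_delta_sign (-1) ltac:(lra)).
  assert (Hhi := eventually_delta_sign 1 ltac:(lra)).
  destruct (filter_and _ _ Hlo Hhi) as [N0 HN0].
  assert (root : forall m, {z | (N0 <= m)%nat ->
                            delta m n z = 0 /\ pstar_approx m n - scale m <= z}).
  { intro m; destruct (le_lt_dec N0 m) as [Hm | Hm]; [| exists 0; lia].
    destruct (HN0 m Hm) as [Hneg Hpos].
    destruct (IVT (delta m n) (pstar_approx m n + -1 * scale m) (pstar_approx m n + 1 * scale m))
      as [z [Hz Hdz]]; [unfold delta; reg | pose proof (scale_pos m); lra | lra | lra |].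
    exists z; split; [exact Hdz | lra]. }
  exists (fun m => proj1_sig (root m)), N0; intros m Hm; exact (proj2_sig (root m) Hm).
Qed.

End Expansion.

Lemma Rdist_scaled_lt p r u eps :
  0 < u -> p - eps * u < r < p + eps * u -> Rdist ((r - p) * / u) 0 < eps.
Proof.
  intros Hu Hr; unfold Rdist; rewrite Rminus_0_r, Rabs_mult, Rabs_inv, (Rabs_pos_eq u) by lra.
  apply (Rmult_lt_reg_r u); [exact Hu |].
  rewrite Rmult_assoc, Rinv_l, Rmult_1_r by lra; apply Rabs_def1; lra.
Qed.

Theorem corollary1 (n : nat) (Hn : (1 <= n)%nat) :
  (* a root of delta_{m,n} that grows with m exists (for all large m) *)
  (exists r : nat -> R,
     (exists N0 : nat, forall m, (N0 <= m)%nat -> delta m n (r m) = 0) /\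
     cv_infty r) /\
  (* and every such growing root satisfies the expansion with an o(m^{-1/3}) error *)
  (forall r : nat -> R,
     (exists N0 : nat, forall m, (N0 <= m)%nat -> delta m n (r m) = 0) ->
     cv_infty r ->
     Un_cv (fun m => (r m - pstar_approx m n) * Rpower (INR m) (1/3)) 0).
Proof.
  split.
  - destruct (eventually_root_exists n Hn) as [r Hr]; exists r; split.
    + exact (filter_imp _ _ (fun m H => proj1 H) Hr).
    + intro Y; change (eventually (fun m => Y < r m)).
      generalize (filter_and _ _ Hr (eventually_pstar_gt n Y (-1))).
      apply filter_imp; intros m [[_ Hlo] HY]; lra.
  - intros r Hroot Hinf eps Heps.
    change (eventually (fun m => Rdist ((r m - pstar_approx m n) * Rpower (INR m) (1 / 3)) 0 < eps)).
    generalize (eventually_root_near_pstar n Hn r eps Heps Hroot Hinf); apply filter_imp.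
    intros m Hm; rewrite <- (Rinv_inv (Rpower (INR m) (1 / 3))).
    exact (Rdist_scaled_lt _ _ _ _ (scale_pos m) Hm).
Qed.
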